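(* Let $T:X\rightrightarrows X^*$ be a pre-maximal pseudomonotone operator. Then $T$ is $D$-maximal pseudomonotone if and only if $\widehat{T}=T^\rho_D$.
   Context: $X$ is a real Banach space with dual $X^*$ and pairing $\langle x,x^*\rangle=x^*(x)$. A multivalued operator $T:X\rightrightarrows X^*$ is identified with its graph $T\subset X\times X^*$; $T(x)=\{x^*:(x,x^* )\in T\}$, $\mathrm{dom}(T)=\{x:T(x)\ne\emptyset\}$, $Z_T=\{x:0\in T(x)\}$. For $A\subset X^*$, $\operatorname{cone}(A)=\{tv:t\ge0,v\in A\}$ and $\operatorname{cone}_\circ(A)=\{tv:t>0,v\in A\}$. For $C\subset X$, $N_C(x)=\{x^*: \langle y-x,x^*\rangle\le0\ \forall y\in C\}$. For $(x,x^* ),(y,y^* )\in X\times X^*$, write $(x,x^* )\sim_p(y,y^* )$ if either $\min\{\langle x-y,y^*\rangle,\langle y-x,x^*\rangle\}<0$ or $\langle x-y,y^*\rangle=\langle y-x,x^*\rangle=0$. The pseudomonotone polar is $T^\rho=\{(x,x^* ): (x,x^* )\sim_p(y,y^* )\ \forall (y,y^* )\in T\}$, and $T^\rho_D$ denotes its restriction to $\mathrm{dom}(T)$. $T$ is pseudomonotone if for all $(x,x^* ),(y,y^* )\in T$, $\langle y-x,x^*\rangle\ge0$ implies $\langle y-x,y^*\rangle\ge0$; $T$ is pre-maximal pseudomonotone if both $T$ and $T^\rho$ are pseudomonotone. Two operators $T,S$ are equivalent if $\mathrm{dom}(T)=\mathrm{dom}(S)$, $Z_T=Z_S$ and $\operatorname{cone}(T(x))=\operatorname{cone}(S(x))$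 for all $x\in\mathrm{dom}(T)\setminus Z_T$. $T$ is $D$-maximal pseudomonotone if $T$ is pseudomonotone and there is a pseudomonotone operator $S$ equivalent to $T$ which has no proper pseudomonotone extension with the same domain. For $x\in Z_T$, $L(T,x)=\{y\in X:\exists y^*\in T(y),\ \langle x-y,y^*\rangle\ge0\}$, and $\widehat T(x)=N_{L(T,x)}(x)$ if $x\in Z_T$, $\widehat T(x)=\operatorname{cone}_\circ(T(x))$ if $x\in\mathrm{dom}(T)\setminus Z_T$, $\widehat T(x)=\emptyset$ if $x\notin\mathrm{dom}(T)$. *)

From Stdlib Require Import Reals.
Open Scope R_scope.

Record BanachSpace := {
  bs_car :> Type;
  bs_zero : bs_car;
  bs_add : bs_car -> bs_car -> bs_car;
  bs_opp : bs_car -> bs_car;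
  bs_scal : R -> bs_car -> bs_car;
  bs_norm : bs_car -> R;
  bs_addA : forall x y z, bs_add x (bs_add y z) = bs_add (bs_add x y) z;
  bs_addC : forall x y, bs_add x y = bs_add y x;
  bs_add0 : forall x, bs_add x bs_zero = x;
  bs_addN : forall x, bs_add x (bs_opp x) = bs_zero;
  bs_scalA : forall a b x, bs_scal a (bs_scal b x) = bs_scal (a * b) x;
  bs_scal1 : forall x, bs_scal 1 x = x;
  bs_scalDr : forall a x y, bs_scal a (bs_add x y) = bs_add (bs_scal a x) (bs_scal a y);
  bs_scalDl : forall a b x, bs_scal (a + b) x = bs_add (bs_scal a x) (bs_scal b x);
  bs_norm_eq0 : forall x, bs_norm x = 0 -> x = bs_zero;
  bs_norm_scal : forall a x, bs_norm (bs_scal a x) = Rabs a * bs_norm x;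
  bs_norm_triangle : forall x y, bs_norm (bs_add x y) <= bs_norm x + bs_norm y;
  bs_complete : forall u : nat -> bs_car,
    (forall eps, eps > 0 -> exists N, forall n m, (n >= N)%nat -> (m >= N)%nat ->
        bs_norm (bs_add (u n) (bs_opp (u m))) < eps) ->
    exists l, forall eps, eps > 0 -> exists N, forall n, (n >= N)%nat ->
        bs_norm (bs_add (u n) (bs_opp l)) < eps
}.

Arguments bs_add {_}. Arguments bs_opp {_}. Arguments bs_scal {_}.
Arguments bs_norm {_}. Arguments bs_zero {_}.

Definition bs_sub {X : BanachSpace} (x y : X) : X := bs_add x (bs_opp y).

Record Dual (X : BanachSpace) := {
  df :> X -> R;
  df_add : forall x y, df (bs_add x y) = df x + df y;
  df_scal : forall a x, df (bs_scal a x) = a * df x;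
  df_bounded : exists M, forall x, Rabs (df x) <= M * bs_norm x
}.
Arguments df {_}.

Definition pairing {X : BanachSpace} (x : X) (xs : Dual X) : R := df xs x.

Definition is_zero_dual {X : BanachSpace} (xs : Dual X) : Prop :=
  forall x, pairing x xs = 0.

(** multivalued operators identified with graphs *)
Definition Operator (X : BanachSpace) := X -> Dual X -> Prop.

Definition dom {X : BanachSpace} (T : Operator X) (x : X) : Prop := exists xs, T x xs.
Definition zeros {X : BanachSpace} (T : Operator X) (x : X) : Prop :=
  exists xs, T x xs /\ is_zero_dual xs.

Definition cone {X : BanachSpace} (A : Dual X -> Prop) (xs : Dual X) : Prop :=
  exists t v, 0 <= t /\ A v /\ forall x, pairing x xs = t * pairing x v.
Definition cone_o {X : BanachSpace} (A : Dual X -> Prop) (xs : Dual X) : Prop :=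
  exists t v, 0 < t /\ A v /\ forall x, pairing x xs = t * pairing x v.

Definition normal_cone {X : BanachSpace} (C : X -> Prop) (x : X) (xs : Dual X) : Prop :=
  forall y, C y -> pairing (bs_sub y x) xs <= 0.

Definition sim_p {X : BanachSpace} (x : X) (xs : Dual X) (y : X) (ys : Dual X) : Prop :=
  Rmin (pairing (bs_sub x y) ys) (pairing (bs_sub y x) xs) < 0 \/
  (pairing (bs_sub x y) ys = 0 /\ pairing (bs_sub y x) xs = 0).

Definition rho_polar {X : BanachSpace} (T : Operator X) : Operator X :=
  fun x xs => forall y ys, T y ys -> sim_p x xs y ys.
Definition rho_polar_D {X : BanachSpace} (T : Operator X) : Operator X :=
  fun x xs => rho_polar T x xs /\ dom T x.

Definition pseudomonotone {X : BanachSpace} (T : Operator X) : Prop :=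
  forall x xs y ys, T x xs -> T y ys ->
    pairing (bs_sub y x) xs >= 0 -> pairing (bs_sub y x) ys >= 0.

Definition pre_maximal_pseudomonotone {X : BanachSpace} (T : Operator X) : Prop :=
  pseudomonotone T /\ pseudomonotone (rho_polar T).

Definition equivalent_ops {X : BanachSpace} (T S : Operator X) : Prop :=
  (forall x, dom T x <-> dom S x) /\
  (forall x, zeros T x <-> zeros S x) /\
  (forall x, dom T x -> ~ zeros T x -> forall xs, cone (T x) xs <-> cone (S x) xs).

Definition no_proper_pm_extension_same_dom {X : BanachSpace} (S : Operator X) : Prop :=
  forall S' : Operator X, pseudomonotone S' ->
    (forall x xs, S x xs -> S' x xs) ->
    (forall x, dom S' x <-> dom S x) ->
    forall x xs, S' x xs -> S x xs.

Definition D_maximal_pseudomonotone {X : BanachSpace} (T : Operator X) : Prop :=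
  pseudomonotone T /\
  exists S : Operator X, pseudomonotone S /\ equivalent_ops T S /\
    no_proper_pm_extension_same_dom S.

Definition L_set {X : BanachSpace} (T : Operator X) (x : X) (y : X) : Prop :=
  exists ys, T y ys /\ pairing (bs_sub x y) ys >= 0.

Definition T_hat {X : BanachSpace} (T : Operator X) : Operator X :=
  fun x xs =>
    (zeros T x /\ normal_cone (L_set T x) x xs) \/
    (dom T x /\ ~ zeros T x /\ cone_o (T x) xs).

(* For pseudomonotone T the polar T^rho contains T and, more generally, every
   pseudomonotone S with the same domain, zeros and cones of directions as T,
   because ~p is invariant under positive rescaling of either functional. If
   such an S has no proper pseudomonotone extension with its domain, then the
   union of S and T^rho_D, which lies in the pseudomonotone T^rho, is not a
   proper one, so T^rho_D is contained in S: off the zeros of T every element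
   of T^rho_D is a positive multiple of an element of T, and at the zeros
   membership in T^rho_D is the normal-cone condition defining T-hat.
   Conversely, if T-hat = T^rho_D then T^rho_D is itself equivalent to T and
   maximal: a pseudomonotone extension of it with the same domain contains T,
   hence lies in T^rho. *)
From Stdlib Require Import Reals Lra Classical.
Open Scope R_scope.
Set Implicit Arguments.
Unset Strict Implicit.

Section PseudomonotonePolar.

Variable X : BanachSpace.
Implicit Types (T S : Operator X) (x y : X) (xs ys s v w : Dual X).

Lemma pairing_zero xs : pairing bs_zero xs = 0.
Proof.
  unfold pairing. assert (H := df_add X xs bs_zero bs_zero).
  rewrite bs_add0 in H. lra.
Qed.

Lemma pairing_opp x xs : pairing (bs_opp x) xs = - pairing x xs.
Proof.
  assert (H := df_add X xs x (bs_opp x)).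
  fold (pairing (bs_add x (bs_opp x)) xs) in H.
  rewrite bs_addN, pairing_zero in H. unfold pairing. lra.
Qed.

Lemma pairing_sub x y xs :
  pairing (bs_sub x y) xs = pairing x xs - pairing y xs.
Proof.
  unfold bs_sub. unfold pairing at 1. rewrite df_add.
  fold (pairing (bs_opp y) xs). rewrite pairing_opp. unfold pairing. ring.
Qed.

Lemma pairing_subC x y xs :
  pairing (bs_sub y x) xs = - pairing (bs_sub x y) xs.
Proof. rewrite !pairing_sub. ring. Qed.

Lemma sim_pE x xs y ys :
  sim_p x xs y ys <->
  (0 <= pairing (bs_sub x y) ys -> pairing (bs_sub y x) xs <= 0) /\
  (0 <= pairing (bs_sub y x) xs -> pairing (bs_sub x y) ys <= 0).
Proof.
  unfold sim_p, Rmin.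
  set (a := pairing (bs_sub x y) ys). set (b := pairing (bs_sub y x) xs).
  destruct (Rle_dec a b), (Rle_lt_dec 0 a), (Rle_lt_dec 0 b);
    split; intros H; try destruct H as [H1 H2]; try lra;
    try (specialize (H1 ltac:(lra))); try (specialize (H2 ltac:(lra))); lra.
Qed.

Definition pos_multiple s w : Prop :=
  exists t, 0 < t /\ forall z, pairing z s = t * pairing z w.

Lemma sim_p_pos_multiple_l x s w y ys :
  pos_multiple s w -> sim_p x w y ys -> sim_p x s y ys.
Proof.
  intros [t [tpos Hsw]]. rewrite !sim_pE, !Hsw.
  intros [H1 H2]; split; intros H.
  - assert (H' := H1 H). nra.
  - apply H2. nra.
Qed.

Lemma sim_p_pos_multiple_r x xs y s w :
  pos_multiple s w -> sim_p x xs y w -> sim_p x xs y s.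
Proof.
  intros [t [tpos Hsw]]. rewrite !sim_pE, !Hsw.
  intros [H1 H2]; split; intros H.
  - apply H1. nra.
  - assert (H' := H2 H). nra.
Qed.

Lemma cone_of_mem (A : Dual X -> Prop) s : A s -> cone A s.
Proof. intros Hs. exists 1, s. repeat split; [lra | exact Hs | intros; ring]. Qed.

Lemma cone_mono (A B : Dual X -> Prop) s :
  (forall w, A w -> B w) -> cone A s -> cone B s.
Proof. intros HAB [t [w [tge0 [Hw Hsw]]]]. exists t, w. auto. Qed.

Lemma cone_pos_multiple (A : Dual X -> Prop) s :
  cone A s -> ~ is_zero_dual s -> exists v, A v /\ pos_multiple s v.
Proof.
  intros [t [v [tge0 [Hv Hsv]]]] Hnz. exists v. split; [exact Hv|].
  exists t. split; [|exact Hsv].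
  destruct (Req_dec t 0) as [t0|]; [|lra].
  exfalso. apply Hnz. intros z. rewrite Hsv, t0. ring.
Qed.

Lemma cone_cone_o (A B : Dual X -> Prop) s :
  (forall w, B w -> cone_o A w) -> cone B s -> cone A s.
Proof.
  intros HBA [t [w [tge0 [Hw Hsw]]]].
  destruct (HBA w Hw) as [t' [v [t'pos [Hv Hwv]]]].
  exists (t * t'), v. repeat split; [nra | exact Hv |].
  intros z. rewrite Hsw, Hwv. ring.
Qed.

Lemma cone_o_zero (A : Dual X -> Prop) s :
  cone_o A s -> is_zero_dual s -> exists v, A v /\ is_zero_dual v.
Proof.
  intros [t [v [tpos [Hv Hsv]]]] Hs. exists v. split; [exact Hv|].
  intros z. assert (H := Hs z). rewrite Hsv in H. nra.
Qed.

Lemma pseudomonotone_sub S S' :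
  (forall x xs, S x xs -> S' x xs) -> pseudomonotone S' -> pseudomonotone S.
Proof. intros HSS' HS' x xs y ys Hx Hy. apply HS'; auto. Qed.

Lemma pseudomonotone_sim_p S x xs y ys :
  pseudomonotone S -> S x xs -> S y ys -> sim_p x xs y ys.
Proof.
  intros HS Hx Hy. apply sim_pE. split; intros H.
  - assert (H' := HS y ys x xs Hy Hx ltac:(lra)). rewrite pairing_subC. lra.
  - assert (H' := HS x xs y ys Hx Hy ltac:(lra)). rewrite pairing_subC. lra.
Qed.

Lemma pseudomonotone_zero S x s y (y0 : Dual X) :
  pseudomonotone S -> S y y0 -> is_zero_dual y0 -> S x s ->
  0 <= pairing (bs_sub x y) s.
Proof.
  intros HS Hy0 Hz Hs. assert (H := HS y y0 x s Hy0 Hs). rewrite (Hz _) in H. lra.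
Qed.

Lemma pseudomonotone_sub_rho_polar T x xs :
  pseudomonotone T -> T x xs -> rho_polar T x xs.
Proof. intros HT Hx y ys Hy. exact (pseudomonotone_sim_p HT Hx Hy). Qed.

Lemma pseudomonotone_sub_rho_polar_D T x xs :
  pseudomonotone T -> T x xs -> rho_polar_D T x xs.
Proof.
  intros HT Hx. split; [exact (pseudomonotone_sub_rho_polar HT Hx) | exists xs; exact Hx].
Qed.

Lemma equivalent_ops_sym T S : equivalent_ops T S -> equivalent_ops S T.
Proof.
  intros [Hdom [Hzero Hcone]]. split; [|split].
  - intros x. symmetry. apply Hdom.
  - intros x. symmetry. apply Hzero.
  - intros x Hd Hnz s. symmetry. apply Hcone; [apply Hdom | rewrite Hzero]; assumption.
Qed.

Lemma equivalent_ops_pos_multiple T S x s :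
  equivalent_ops T S -> ~ zeros T x -> S x s ->
  exists v, T x v /\ pos_multiple s v.
Proof.
  intros [Hdom [Hzero Hcone]] HnzT Hs.
  apply cone_pos_multiple.
  - apply (Hcone x); [apply Hdom; exists s; exact Hs | exact HnzT |].
    exact (cone_of_mem Hs).
  - intros Hz. apply HnzT, Hzero. exists s. auto.
Qed.

Lemma equivalent_sub_rho_polar T S x s :
  pseudomonotone T -> pseudomonotone S -> equivalent_ops T S ->
  S x s -> rho_polar T x s.
Proof.
  intros HT HS Heqv Hs y ys Hy.
  destruct (classic (zeros T x)) as [[x0 [Hx0 Hz0]] | HnzTx].
  - destruct (classic (zeros T y)) as [HzTy | HnzTy].
    + destruct (proj1 (proj1 (proj2 Heqv) y) HzTy) as [y0 [Hy0 Hzy0]].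
      assert (Hxs := pseudomonotone_zero HS Hy0 Hzy0 Hs).
      assert (Hyys := pseudomonotone_zero HT Hx0 Hz0 Hy).
      rewrite pairing_subC in Hxs, Hyys. apply sim_pE. split; intros; lra.
    + assert (HnzSy : ~ zeros S y) by (rewrite <- (proj1 (proj2 Heqv) y); exact HnzTy).
      destruct (equivalent_ops_pos_multiple (equivalent_ops_sym Heqv) HnzSy Hy)
        as [w [Hw Hysw]].
      exact (sim_p_pos_multiple_r Hysw (pseudomonotone_sim_p HS Hs Hw)).
  - destruct (equivalent_ops_pos_multiple Heqv HnzTx Hs) as [v [Hv Hsv]].
    exact (sim_p_pos_multiple_l Hsv (pseudomonotone_sub_rho_polar HT Hv Hy)).
Qed.

Lemma rho_polar_D_sub_maximal T S x xs :
  pseudomonotone (rho_polar T) -> (forall x s, S x s -> rho_polar T x s) ->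
  (forall x, dom S x <-> dom T x) -> no_proper_pm_extension_same_dom S ->
  rho_polar_D T x xs -> S x xs.
Proof.
  intros HR HSR Hdom Hmax Hxs.
  apply (Hmax (fun x xs => S x xs \/ rho_polar_D T x xs)); [| now left | | now right].
  - apply (pseudomonotone_sub (S' := rho_polar T)); [|exact HR].
    intros a as_ [Ha | [Ha _]]; auto.
  - intros a. split.
    + intros [as_ [Ha | [_ Hd]]]; [exists as_; exact Ha | apply Hdom; exact Hd].
    + intros [as_ Ha]. exists as_. now left.
Qed.

Lemma T_hat_sub_rho_polar_D T x xs :
  pseudomonotone T -> T_hat T x xs -> rho_polar_D T x xs.
Proof.
  intros HT [[[x0 [Hx0 Hz0]] HN] | [Hd [_ [t [v [tpos [Hv Hxsv]]]]]]].
  - split; [| exists x0; exact Hx0].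
    intros y ys Hy. apply sim_pE. split; intros H.
    + apply HN. exists ys. split; [exact Hy | lra].
    + assert (H' := pseudomonotone_zero HT Hx0 Hz0 Hy). rewrite pairing_subC. lra.
  - split; [| exact Hd]. intros y ys Hy.
    apply (@sim_p_pos_multiple_l _ _ v); [exists t; auto |].
    exact (pseudomonotone_sub_rho_polar HT Hv Hy).
Qed.

Lemma rho_polar_normal_cone T x xs :
  rho_polar T x xs -> normal_cone (L_set T x) x xs.
Proof.
  intros HR y [ys [Hy Hge]]. apply (proj1 (sim_pE _ _ _ _) (HR y ys Hy)). lra.
Qed.

Lemma rho_polar_D_sub_T_hat T S x xs :
  pre_maximal_pseudomonotone T -> pseudomonotone S -> equivalent_ops T S ->
  no_proper_pm_extension_same_dom S ->
  rho_polar_D T x xs -> T_hat T x xs.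
Proof.
  intros [HT HR] HS Heqv Hmax [HRx Hd].
  destruct (classic (zeros T x)) as [HzTx | HnzTx].
  - left. split; [exact HzTx | exact (rho_polar_normal_cone HRx)].
  - right. repeat split; [exact Hd | exact HnzTx |].
    assert (Hs : S x xs).
    { apply (rho_polar_D_sub_maximal HR); [| | exact Hmax | split; assumption].
      - intros a s Ha. exact (equivalent_sub_rho_polar HT HS Heqv Ha).
      - intros a. symmetry. apply (proj1 Heqv). }
    destruct (equivalent_ops_pos_multiple Heqv HnzTx Hs) as [v [Hv [t [tpos Hxsv]]]].
    exists t, v. auto.
Qed.

Lemma rho_polar_D_no_proper_extension T :
  pseudomonotone T -> no_proper_pm_extension_same_dom (rho_polar_D T).
Proof.
  intros HT S' HS' Hsub Hdom x xs Hx. split.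
  - intros y ys Hy. apply (pseudomonotone_sim_p HS' Hx), Hsub.
    exact (pseudomonotone_sub_rho_polar_D HT Hy).
  - destruct (proj1 (Hdom x) (ex_intro _ xs Hx)) as [xs' [_ Hd]]. exact Hd.
Qed.

Lemma equivalent_rho_polar_D T :
  pseudomonotone T -> (forall x xs, rho_polar_D T x xs -> T_hat T x xs) ->
  equivalent_ops T (rho_polar_D T).
Proof.
  intros HT Hhat. split; [|split].
  - intros x. split; intros [xs Hx].
    + exists xs. exact (pseudomonotone_sub_rho_polar_D HT Hx).
    + exact (proj2 Hx).
  - intros x. split; intros [xs [Hx Hz]].
    + exists xs. split; [exact (pseudomonotone_sub_rho_polar_D HT Hx) | exact Hz].
    + destruct (Hhat x xs Hx) as [[HzTx _] | [_ [_ Hcone]]]; [exact HzTx |].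
      destruct (cone_o_zero Hcone Hz) as [v [Hv Hzv]]. exists v. auto.
  - intros x Hd HnzTx xs. split.
    + apply cone_mono. intros w. exact (pseudomonotone_sub_rho_polar_D HT).
    + apply cone_cone_o. intros w Hw.
      destruct (Hhat x w Hw) as [[HzTx _] | [_ [_ Hcone]]]; [contradiction | exact Hcone].
Qed.

End PseudomonotonePolar.

Theorem mainTheorem16 (X : BanachSpace) (T : Operator X) :
  pre_maximal_pseudomonotone T ->
  (D_maximal_pseudomonotone T <->
   (forall (x : X) (xs : Dual X), T_hat T x xs <-> rho_polar_D T x xs)).
Proof.
  intros [HT HR]. split.
  - intros [_ [S [HS [Heqv Hmax]]]] x xs. split.
    + exact (T_hat_sub_rho_polar_D HT).
    + exact (rho_polar_D_sub_T_hat (conj HT HR) HS Heqv Hmax).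
  - intros Hhat. split; [exact HT |].
    exists (rho_polar_D T). split; [|split].
    + apply (pseudomonotone_sub (S' := rho_polar T)); [now intros x xs [Hx _] | exact HR].
    + apply equivalent_rho_polar_D; [exact HT | intros x xs; apply Hhat].
    + exact (rho_polar_D_no_proper_extension HT).
Qed.
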